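(* Let $\mathbf V$ be a set of unlabelled 1-graphs and let $\mathbf G_2(\mathbf V)$ be the set of unlabelled 2-graphs all of whose vertex graphs lie (up to isomorphism) in $\mathbf V$. Let $\overline{\mathbf G_2(\mathbf V)}=\{\Gamma'/\Theta:\ \Theta\subseteq\Gamma'\in\mathbf G_2(\mathbf V)\}$ be its contraction closure. Then the subalgebra $\langle\overline{\mathbf G_2(\mathbf V)}\rangle$ of the 2-graph bialgebra $\mathcal G$ generated by $\overline{\mathbf G_2(\mathbf V)}$ is a subbialgebra of $\mathcal G$.
   Context: A 1-graph is $(\mathcal V,\mathcal H,\nu,\iota)$: finite sets, $\nu:\mathcal H\to\mathcal V$, $\iota$ an involution of $\mathcal H$; isomorphisms are pairs of bijections intertwining $\nu$ and $\iota$. A 2-graph is $G=(\mathcal V,\mathcal H,\nu,\iota;\mathcal S,\mu,\sigma_1,\sigma_2)$: a 1-graph together with a finite set $\mathcal S$ of strand sections, $\mu:\mathcal S\to\mathcal H$, a fixed-point free involution $\sigma_1$ of $\mathcal S$ with $\nu\circ\mu\circ\sigma_1=\nu\circ\mu$, and an involution $\sigma_2$ of $\mathcal S$ with $\iota\circ\mu=\mu\circ\sigma_2$ such that $s$ is fixed by $\sigma_2$ iff $\mu(s)$ is fixed by $\iota$. The vertex graph of $v\in\mathcal V$ is the 1-graph $g_v=(\nu^{-1}(v),(\nu\circ\mu)^{-1}(v),\mu|,\sigma_1|)$. Edges are two-element orbits of $\iota$; edge strands are two-element orbits of $\sigma_2$; fixed points are external. A subgraph $H\subseteq G$ differs from $G$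 only in having a subset of the edges and the corresponding subset of edge strands (the removed ones becoming external). An external face of $H$ is a tuple $(s_1,\dots,s_{2n})$ of distinct strand sections with $s_{2i}=\sigma_1(s_{2i-1})$, $s_{2i+1}=\sigma_{2,H}(s_{2i})$, $s_1,s_{2n}$ fixed by $\sigma_{2,H}$. The contraction $G/H$ has vertices the connected components of $H$, half-edges and strand sections the external ones of $H$, $\nu$ mapping to the component, $\mu$ restricted, edges and edge strands those of $G$ not in $H$, and $\sigma_1$ pairing $s_1$ with $s_{2n}$ for each external face of $H$. Unlabelled 2-graphs are isomorphism classes (bijections on vertices, half-edges, strand sections intertwining all structure). The bialgebra $\mathcal G$ is the $\mathbb Q$-vector space with basis all unlabelled 2-graphs, product disjoint union, unit the empty 2-graph, coproduct $\Delta(\Gamma)=\sum_{\Theta\subseteq\Gamma}\Theta\otimes\Gamma/\Theta$ (sum over subgraphs) and counit $\epsilon(\Gamma)=1$ if $\Gamma$ has no edges and $0$ otherwise. *)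

From mathcomp Require Import all_boot all_order all_algebra.
Set Implicit Arguments. Unset Strict Implicit. Unset Printing Implicit Defensive.
Import GRing.Theory.
Local Open Scope ring_scope.

Record graph1 := Graph1 {
  nv1 : nat; nh1 : nat;
  nu1 : {ffun 'I_nh1 -> 'I_nv1};
  iota1 : {ffun 'I_nh1 -> 'I_nh1} }.

(* Labelled (raw) 2-graphs: vertices 'I_nv, half-edges 'I_nh,
   strand sections 'I_ns. *)
Record graph2 := Graph2 {
  nv : nat; nh : nat; ns : nat;
  g_nu : {ffun 'I_nh -> 'I_nv};
  g_iota : {ffun 'I_nh -> 'I_nh};
  g_mu : {ffun 'I_ns -> 'I_nh};
  g_s1 : {ffun 'I_ns -> 'I_ns};
  g_s2 : {ffun 'I_ns -> 'I_ns} }.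

Definition valid2 (G : graph2) : bool :=
  [&& [forall h, g_iota G (g_iota G h) == h],
      [forall s, g_s1 G (g_s1 G s) == s],
      [forall s, g_s1 G s != s],
      [forall s, g_nu G (g_mu G (g_s1 G s)) == g_nu G (g_mu G s)],
      [forall s, g_s2 G (g_s2 G s) == s],
      [forall s, g_iota G (g_mu G s) == g_mu G (g_s2 G s)] &
      [forall s, (g_s2 G s == s) == (g_iota G (g_mu G s) == g_mu G s)]].

(* Isomorphism of 2-graphs: bijections (injective maps between sets of
   the same size) on vertices, half-edges, strand sections intertwining
   nu, iota, mu, sigma_1, sigma_2. *)
Definition iso2 (G H : graph2) : bool :=
  [&& nv G == nv H, nh G == nh H, ns G == ns H &
   [exists fV : {ffun 'I_(nv G) -> 'I_(nv H)},
    exists fH : {ffun 'I_(nh G) -> 'I_(nh H)},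
    exists fS : {ffun 'I_(ns G) -> 'I_(ns H)},
    [&& injectiveb fV, injectiveb fH, injectiveb fS,
        [forall h, fV (g_nu G h) == g_nu H (fH h)],
        [forall h, fH (g_iota G h) == g_iota H (fH h)],
        [forall s, fH (g_mu G s) == g_mu H (fS s)],
        [forall s, fS (g_s1 G s) == g_s1 H (fS s)] &
        [forall s, fS (g_s2 G s) == g_s2 H (fS s)]]]].

(* The vertex graph has vertex set nu^-1(v), half-edge set
   (nu o mu)^-1(v), incidence mu and involution sigma_1 (restricted);
   the isomorphism is given as bijections from g1 onto these sets. *)
Definition vg_iso (G : graph2) (v : 'I_(nv G)) (g1 : graph1) : bool :=
  [exists fV : {ffun 'I_(nv1 g1) -> 'I_(nh G)},
   exists fH : {ffun 'I_(nh1 g1) -> 'I_(ns G)},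
   [&& injectiveb fV, injectiveb fH,
       [forall h, (g_nu G h == v) == (h \in codom fV)],
       [forall s, (g_nu G (g_mu G s) == v) == (s \in codom fH)],
       [forall x, g_mu G (fH x) == fV (nu1 g1 x)] &
       [forall x, g_s1 G (fH x) == fH (iota1 g1 x)]]].

Definition inG2 (V : graph1 -> Prop) (G : graph2) : Prop :=
  valid2 G /\ forall v : 'I_(nv G), exists g1, V g1 /\ @vg_iso G v g1.

(* A subgraph is given by its set of (internal) half-edges K,
   which must be a union of edges (iota-closed, no iota-fixed points);
   such K are in bijection with subsets of the set of edges. *)
Definition edgeset (G : graph2) (K : {set 'I_(nh G)}) : bool :=
  [forall h, (h \in K) ==> ((g_iota G h \in K) && (g_iota G h != h))].

Definition sub_iota (G : graph2) (K : {set 'I_(nh G)}) :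
  {ffun 'I_(nh G) -> 'I_(nh G)} :=
  [ffun h => if h \in K then g_iota G h else h].

Definition sub_s2 (G : graph2) (K : {set 'I_(nh G)}) :
  {ffun 'I_(ns G) -> 'I_(ns G)} :=
  [ffun s => if g_mu G s \in K then g_s2 G s else s].

Definition subg (G : graph2) (K : {set 'I_(nh G)}) : graph2 :=
  @Graph2 (nv G) (nh G) (ns G) (g_nu G) (sub_iota K) (g_mu G) (g_s1 G)
          (sub_s2 K).

Definition compRel (G : graph2) (K : {set 'I_(nh G)}) : rel 'I_(nv G) :=
  fun v w => [exists h, [&& h \in K, g_nu G h == v & g_nu G (g_iota G h) == w]].

(* connected components of the subgraph, represented by their roots *)
Definition compR (G : graph2) (K : {set 'I_(nh G)}) : {set 'I_(nv G)} :=
  [set fingraph.root (compRel K) v | v in [set: 'I_(nv G)]].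

Definition extH (G : graph2) (K : {set 'I_(nh G)}) : {set 'I_(nh G)} :=
  [set h | h \notin K].
Definition extS (G : graph2) (K : {set 'I_(nh G)}) : {set 'I_(ns G)} :=
  [set s | g_mu G s \notin K].

Lemma extS_extH (G : graph2) (K : {set 'I_(nh G)}) (s : 'I_(ns G)) :
  s \in extS K -> g_mu G s \in extH K.
Proof. by rewrite !inE. Qed.

Lemma root_compR (G : graph2) (K : {set 'I_(nh G)}) (v : 'I_(nv G)) :
  fingraph.root (compRel K) v \in compR K.
Proof. by apply: imset_f; rewrite inE. Qed.

(* For an external strand section s (= s_1 of an external face), the
   last element s_{2n} of the external face (s_1, ..., s_{2n}):
   s_2 = sigma_1 s_1, and s_{2i+2} = sigma_1 (sigma_2H s_{2i}) until a
   sigma_2H-fixed element is reached (at most ns steps). *)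
Definition faceend (G : graph2) (K : {set 'I_(nh G)}) (s : 'I_(ns G)) :
  'I_(ns G) :=
  iter (ns G)
    (fun x => if sub_s2 K x == x then x else g_s1 G (sub_s2 K x))
    (g_s1 G s).

Definition contr (G : graph2) (K : {set 'I_(nh G)}) : graph2 :=
  @Graph2 #|compR K| #|extH K| #|extS K|
    [ffun h => enum_rank_in (root_compR K (g_nu G (enum_val h)))
                            (fingraph.root (compRel K) (g_nu G (enum_val h)))]
    [ffun h => enum_rank_in (enum_valP h) (g_iota G (enum_val h))]
    [ffun s => enum_rank_in (extS_extH (enum_valP s)) (g_mu G (enum_val s))]
    [ffun s => enum_rank_in (enum_valP s) (faceend K (enum_val s))]
    [ffun s => enum_rank_in (enum_valP s) (g_s2 G (enum_val s))].

Definition sumf (a b c d : nat) (f : 'I_a -> 'I_b) (g : 'I_c -> 'I_d)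
  (x : 'I_(a + c)) : 'I_(b + d) :=
  match split x with
  | inl y => lshift d (f y)
  | inr y => rshift b (g y)
  end.

Definition dunion (G H : graph2) : graph2 :=
  @Graph2 (nv G + nv H) (nh G + nh H) (ns G + ns H)
    [ffun x => sumf (g_nu G) (g_nu H) x]
    [ffun x => sumf (g_iota G) (g_iota H) x]
    [ffun x => sumf (g_mu G) (g_mu H) x]
    [ffun x => sumf (g_s1 G) (g_s1 H) x]
    [ffun x => sumf (g_s2 G) (g_s2 H) x].

Definition empty2 : graph2 :=
  @Graph2 0 0 0 [ffun x => x] [ffun x => x] [ffun x => x] [ffun x => x]
          [ffun x => x].

(* An element is represented by a formal Q-linear
   combination of labelled 2-graphs; two representations denote the same
   vector when their coefficients agree on every isomorphism class
   (i.e. on every basis element = unlabelled 2-graph). *)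
Definition vec := seq (rat * graph2).
Definition vec2 := seq (rat * (graph2 * graph2)).   (* elements of G (x) G *)

Definition valid_vec (v : vec) : bool := all (fun p => valid2 p.2) v.

Definition coef (v : vec) (g : graph2) : rat :=
  \sum_(p <- v | iso2 p.2 g) p.1.
Definition coef2 (t : vec2) (g h : graph2) : rat :=
  \sum_(p <- t | iso2 p.2.1 g && iso2 p.2.2 h) p.1.

Definition veq (u v : vec) : Prop := forall g, coef u g = coef v g.
Definition veq2 (t t' : vec2) : Prop := forall g h, coef2 t g h = coef2 t' g h.

Definition vzero : vec := [::].
Definition vunit : vec := [:: (1, empty2)].
Definition vbasis (g : graph2) : vec := [:: (1, g)].
Definition vadd (u v : vec) : vec := u ++ v.
Definition vscale (c : rat) (u : vec) : vec := [seq (c * p.1, p.2) | p <- u].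
Definition vmul (u v : vec) : vec :=
  [seq (p.1 * q.1, dunion p.2 q.2) | p <- u, q <- v].

Definition tens (u v : vec) : vec2 :=
  [seq (p.1 * q.1, (p.2, q.2)) | p <- u, q <- v].

Definition cop1 (G : graph2) : vec2 :=
  [seq (1, (subg K, contr K)) | K <- enum [set K : {set 'I_(nh G)} | edgeset K]].
Definition Delta (v : vec) : vec2 :=
  flatten [seq [seq (p.1 * q.1, q.2) | q <- cop1 p.2] | p <- v].

(* Subsets of G (predicates on representations, required to respect veq). *)
Definition is_subalgebra (A : vec -> Prop) : Prop :=
  (forall u, A u -> valid_vec u) /\
  (forall u v, A u -> valid_vec v -> veq u v -> A v) /\
  A vzero /\ A vunit /\
  (forall u v, A u -> A v -> A (vadd u v)) /\
  (forall c u, A u -> A (vscale c u)) /\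
  (forall u v, A u -> A v -> A (vmul u v)).

Definition gen_subalg (S : graph2 -> Prop) (v : vec) : Prop :=
  valid_vec v /\
  forall P : vec -> Prop, is_subalgebra P ->
    (forall g, valid2 g -> S g -> P (vbasis g)) -> P v.

Fixpoint Allp (T : Type) (P : T -> Prop) (s : seq T) : Prop :=
  match s with [::] => True | x :: s' => P x /\ Allp P s' end.

Definition in_tensor (A : vec -> Prop) (t : vec2) : Prop :=
  exists ab : seq (rat * (vec * vec)),
    Allp (fun p => A p.2.1 /\ A p.2.2) ab /\
    veq2 t (flatten [seq [seq (p.1 * q.1, q.2) | q <- tens p.2.1 p.2.2] | p <- ab]).

Definition is_subbialgebra (A : vec -> Prop) : Prop :=
  is_subalgebra A /\ forall v, A v -> in_tensor A (Delta v).

(* contraction closure of G_2(V) (as a set of unlabelled 2-graphs: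
   membership up to isomorphism) *)
Definition G2bar (V : graph1 -> Prop) (g : graph2) : Prop :=
  exists (G' : graph2) (K : {set 'I_(nh G')}),
    inG2 V G' /\ edgeset K /\ iso2 (contr K) g.

From mathcomp Require Import all_boot all_algebra zify.
Set Implicit Arguments. Unset Strict Implicit. Unset Printing Implicit Defensive.

(* A generator of the subalgebra is G/K with G in G_2(V).  A subgraph K' of
   G/K lifts to the subgraph K + K' of G (K together with the edges of K'),
   and then  K' ~ (K + K')/K  and  (G/K)/K' ~ G/(K + K').  Subgraphs of G
   have the same vertex graphs as G, so both tensor factors of every term of
   the coproduct of a generator are generators again.  The coproduct respects
   isomorphism classes, is linear and is multiplicative for disjoint unions,
   so the elements of the subalgebra whose coproduct lies in its tensor
   square form a subalgebra; it contains the generators, hence everything. *)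

Lemma connect_map (T1 T2 : finType) (e1 : rel T1) (e2 : rel T2) (m : T1 -> T2) :
  (forall x y, e1 x y -> connect e2 (m x) (m y)) ->
  forall x y, connect e1 x y -> connect e2 (m x) (m y).
Proof.
move=> H x y /connectP[p Hp ->]; elim: p x Hp => [|z p IH] x /=; first by rewrite connect0.
by case/andP => exz Hp; apply: connect_trans (H _ _ exz) (IH _ Hp).
Qed.

Lemma connect_lift (T1 T2 : finType) (e1 : rel T1) (e2 : rel T2) (m : T1 -> T2) :
  (forall y, exists a, m a = y) ->
  (forall a b, m a = m b -> connect e1 a b) ->
  (forall a b, e2 (m a) (m b) -> connect e1 a b) ->
  forall a b, connect e2 (m a) (m b) -> connect e1 a b.
Proof.
move=> m_surj Hfib He a b /connectP[p]; elim: p a => [|z p IH] a /= => [_|/andP[ez Hp]] Hl.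
  exact: Hfib.
have [a' Ha'] := m_surj z; subst z.
exact: connect_trans (He _ _ ez) (IH _ Hp Hl).
Qed.

Lemma connect_fun_eq (T : finType) (R : Type) (e : rel T) (m : T -> R) :
  (forall x y, e x y -> m x = m y) -> forall x y, connect e x y -> m x = m y.
Proof.
move=> He x y /connectP[p Hp ->]; elim: p x Hp => [|z p IH] x //= /andP[exz Hp].
by rewrite (He _ _ exz); apply: IH.
Qed.

(** * Faces of a pair of involutions *)

(* With [face_turn = f \o g], a g-fixed point s starts the walk s, f s,
   g (f s), ...; the points reached after each f-step are the iterates of
   [face_turn] on s.  Since g conjugates [face_turn] to its inverse, the
   orbit of s has even order 2j and its only g-fixed points are s and
   [iter j face_turn s], which is where the walk stops. *)
Section InvolutionFaces.
Variables (T : finType) (f g : T -> T).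
Hypotheses (fK : involutive f) (f_neq : forall x, f x != x) (gK : involutive g).

Definition face_step x := if g x == x then x else f (g x).
Definition face_end n s := iter n face_step (f s).
Definition face_rel := [rel x y | (y == f x) || (y == g x)].
Definition face_turn x := f (g x).
Local Notation turn := face_turn.

Lemma face_turn_inj : injective turn.
Proof. by move=> x y /(inv_inj fK) /(inv_inj gK). Qed.

Lemma iter_turn_inj k : injective (iter k turn).
Proof. by elim: k => //= k IH x y /face_turn_inj /IH. Qed.

Lemma iter_turn_g k x : iter k turn (g (iter k turn x)) = g x.
Proof. by elim: k => // k IH; rewrite iterSr iterS /turn gK fK. Qed.

Lemma face_rel_csym : connect_sym face_rel.
Proof.
apply: sym_connect_sym => x y /=.
apply/orP/orP => -[/eqP->|/eqP->]; by [left; rewrite fK | right; rewrite gK].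
Qed.

Lemma connect_iter_turn x k : connect face_rel x (iter k turn x).
Proof.
elim: k => [|k IH]; first exact: connect0.
apply: (connect_trans IH); rewrite iterS; set y := iter k turn x.
by apply: (@connect_trans _ _ (g y)); apply: connect1; rewrite /= eqxx ?orbT.
Qed.

Section FaceFrom.
Variable s : T.
Hypothesis gs : g s = s.
Local Notation c := (order turn s).
Local Notation j := (c./2).

Lemma iter_order_turn : iter c turn s = s.
Proof. exact: (iter_order face_turn_inj s). Qed.

Lemma iter_turn_lt_inj i k : i < c -> k < c -> iter i turn s = iter k turn s -> i = k.
Proof. by move=> ic kc e; rewrite -(findex_iter ic) -(findex_iter kc) e. Qed.

Lemma g_fixed_iter_turn k : (g (iter k turn s) == iter k turn s) = (iter (k + k) turn s == s).
Proof.
apply/eqP/eqP => [e | e]; first by rewrite iterD -{1}e iter_turn_g gs.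
by apply: (@iter_turn_inj k); rewrite iter_turn_g gs -iterD e.
Qed.

(* An odd order 2j+1 would make [iter j.+1 turn s] a fixed point of f. *)
Lemma order_turn_even : c = j + j.
Proof.
rewrite addnn -[in LHS](odd_double_half c); case oc: (odd c) => //.
set y := iter j.+1 turn s.
have fy : f y = turn (g y) by rewrite /turn gK.
have : iter j.+1 turn (f y) = iter j.+1 turn y.
  rewrite fy -iterSr iterS iter_turn_g gs /y -iterD.
  have -> : j.+1 + j.+1 = 1 + c by rewrite -[in RHS](odd_double_half c) oc; lia.
  by rewrite iterD iter_order_turn.
by move/iter_turn_inj/eqP; rewrite (negbTE (f_neq y)).
Qed.

Lemma half_order_gt0 : 0 < j.
Proof. by have := order_gt0 turn s; rewrite {1}order_turn_even; lia. Qed.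

Lemma g_fixed_half_order : g (iter j turn s) = iter j turn s.
Proof. by apply/eqP; rewrite g_fixed_iter_turn -order_turn_even iter_order_turn. Qed.

Lemma g_moved_iter_turn k : 0 < k < j -> g (iter k turn s) != iter k turn s.
Proof.
case/andP=> k0 kj; rewrite g_fixed_iter_turn; apply/eqP => e.
have k2c : k + k < c by rewrite order_turn_even; lia.
by have := iter_turn_lt_inj k2c (order_gt0 turn s) e; lia.
Qed.

Lemma iter_face_step m : iter m face_step (f s) = iter (minn m.+1 j) turn s.
Proof.
elim: m => [|m IH]; first by rewrite /= (minn_idPl half_order_gt0) /= /turn gs.
rewrite iterS IH; case: (ltnP m.+1 j) => Hm.
  by rewrite (minn_idPl Hm) /face_step (negbTE (g_moved_iter_turn _)) ?Hm.
by rewrite (minn_idPr (leqW Hm)) /face_step g_fixed_half_order eqxx.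
Qed.

Lemma face_endE n : #|T| <= n -> face_end n s = iter j turn s.
Proof.
move=> Hn; rewrite /face_end iter_face_step (minn_idPr _) //.
have c_le : c <= #|T| by rewrite -size_orbit -(card_uniqP (orbit_uniq turn s)) max_card.
by move: (order_turn_even) half_order_gt0; lia.
Qed.

Lemma face_end_spec n : #|T| <= n ->
  [/\ g (face_end n s) = face_end n s, face_end n s != s & connect face_rel s (face_end n s)].
Proof.
move=> Hn; rewrite face_endE //; split; [exact: g_fixed_half_order | | exact: connect_iter_turn].
apply/eqP => e; have jc : j < c by move: order_turn_even half_order_gt0; lia.
by have := iter_turn_lt_inj jc (order_gt0 turn s) e; move: half_order_gt0; lia.
Qed.

Lemma closed_orbit_turn : closed face_rel (fconnect turn s).
Proof.
apply: intro_closed; first exact: face_rel_csym.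
move=> x y xy Hx; have xk := iter_findex Hx; have kc := findex_max Hx.
set k := findex turn s x in xk kc.
have gx : g x \in fconnect turn s.
  suff -> : g x = iter (c - k) turn s by apply: fconnect_iter.
  apply: (@iter_turn_inj k).
  by rewrite -{1}xk iter_turn_g gs -iterD subnKC ?iter_order_turn // ltnW.
case/orP: xy => /eqP -> //.
have -> : f x = turn (g x) by rewrite /turn gK.
exact: connect_trans gx (fconnect1 _ _).
Qed.

Lemma face_end_uniq n t : #|T| <= n -> g t = t -> t != s -> connect face_rel s t ->
  t = face_end n s.
Proof.
move=> Hn gt ts cst.
have Ht : t \in fconnect turn s.
  by rewrite -(closed_connect closed_orbit_turn cst) inE connect0.
have tk := iter_findex Ht; have kc := findex_max Ht; set k := findex turn s t in tk kc.
have e2 : iter (k + k) turn s = s by apply/eqP; rewrite -g_fixed_iter_turn tk gt.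
have k2 : k + k = c.
  case: (ltnP (k + k) c) => Hkk.
    have k0 : k = 0 by move: (iter_turn_lt_inj Hkk (order_gt0 turn s) e2); lia.
    by move: ts; rewrite -tk k0 eqxx.
  rewrite -(subnK Hkk) iterD iter_order_turn in e2.
  have : k + k - c < c by move: kc; lia.
  by move/iter_turn_lt_inj/(_ (order_gt0 turn s) e2); lia.
by rewrite face_endE // -tk; congr iter; move: order_turn_even; lia.
Qed.

End FaceFrom.
End InvolutionFaces.

(** * Axioms and isomorphisms of 2-graphs *)

Variant valid2_spec (G : graph2) : Prop :=
  Valid2Spec of involutive (g_iota G) & involutive (g_s1 G)
  & (forall s, g_s1 G s != s)
  & (forall s, g_nu G (g_mu G (g_s1 G s)) = g_nu G (g_mu G s))
  & involutive (g_s2 G)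
  & (forall s, g_iota G (g_mu G s) = g_mu G (g_s2 G s))
  & (forall s, (g_s2 G s == s) = (g_iota G (g_mu G s) == g_mu G s)).

Lemma valid2P G : reflect (valid2_spec G) (valid2 G).
Proof.
apply: (iffP idP) => [|[iK s1K s1F nuF s2K imu s2F]].
  case/and5P=> /forallP iK /forallP s1K /forallP s1F /forallP nuF.
  case/and3P=> /forallP s2K /forallP imu /forallP s2F.
  by split=> x; [exact/eqP/iK | exact/eqP/s1K | exact: s1F | exact/eqP/nuF
    | exact/eqP/s2K | exact/eqP/imu | exact: (eqP (s2F x))].
by apply/and5P; split; [| | | | apply/and3P; split]; apply/forallP => x;
  rewrite ?s1F ?iK ?s1K ?nuF ?s2K ?s2F ?imu ?eqxx.
Qed.

Section ValidAxioms.
Variables (G : graph2) (vG : valid2 G).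

Lemma valid_iotaK : involutive (g_iota G). Proof. by case/valid2P: vG. Qed.
Lemma valid_s1K : involutive (g_s1 G). Proof. by case/valid2P: vG. Qed.
Lemma valid_s1_neq s : g_s1 G s != s. Proof. by case/valid2P: vG. Qed.
Lemma valid_nu_s1 s : g_nu G (g_mu G (g_s1 G s)) = g_nu G (g_mu G s).
Proof. by case/valid2P: vG. Qed.
Lemma valid_s2K : involutive (g_s2 G). Proof. by case/valid2P: vG. Qed.
Lemma valid_iota_mu s : g_iota G (g_mu G s) = g_mu G (g_s2 G s).
Proof. by case/valid2P: vG. Qed.
Lemma valid_s2_fixed s : (g_s2 G s == s) = (g_iota G (g_mu G s) == g_mu G s).
Proof. by case/valid2P: vG. Qed.

End ValidAxioms.

Record iso2_maps (G H : graph2) := Iso2Maps {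
  isoV : 'I_(nv G) -> 'I_(nv H);
  isoH : 'I_(nh G) -> 'I_(nh H);
  isoS : 'I_(ns G) -> 'I_(ns H);
  isoV_bij : bijective isoV;
  isoH_bij : bijective isoH;
  isoS_bij : bijective isoS;
  iso_nu h : isoV (g_nu G h) = g_nu H (isoH h);
  iso_iota h : isoH (g_iota G h) = g_iota H (isoH h);
  iso_mu s : isoH (g_mu G s) = g_mu H (isoS s);
  iso_s1 s : isoS (g_s1 G s) = g_s1 H (isoS s);
  iso_s2 s : isoS (g_s2 G s) = g_s2 H (isoS s) }.

Lemma iso2P G H : reflect (inhabited (iso2_maps G H)) (iso2 G H).
Proof.
apply: (iffP idP).
  case/and4P => /eqP eV /eqP eH /eqP eS /existsP[fV /existsP[fH /existsP[fS]]].
  case/and5P => /injectiveP iV /injectiveP iH /injectiveP iS /forallP Hnu.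
  case/and4P => /forallP Hio /forallP Hmu /forallP Hs1 /forallP Hs2.
  constructor; apply: (@Iso2Maps G H fV fH fS);
    do ?[by apply: inj_card_bij; rewrite ?card_ord ?eV ?eH ?eS]; by move=> x; apply/eqP.
case=> -[fV fH fS bV bH bS Hnu Hio Hmu Hs1 Hs2].
apply/and4P; split.
- by have := bij_eq_card bV; rewrite !card_ord => ->.
- by have := bij_eq_card bH; rewrite !card_ord => ->.
- by have := bij_eq_card bS; rewrite !card_ord => ->.
apply/existsP; exists [ffun x => fV x]; apply/existsP; exists [ffun x => fH x].
apply/existsP; exists [ffun x => fS x].
apply/and5P; split; try (apply/and4P; split); try (apply/injectiveP => x y; rewrite !ffunE);
  try (apply/forallP => x; rewrite !ffunE ?Hnu ?Hio ?Hmu ?Hs1 ?Hs2 //); exact: bij_inj.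
Qed.

Lemma iso2_refl G : iso2 G G.
Proof. by apply/iso2P; constructor; apply: (@Iso2Maps G G id id id); try exact: inv_bij. Qed.

Lemma iso2_sym G H : iso2 G H = iso2 H G.
Proof.
suff sym G' H' : iso2 G' H' -> iso2 H' G' by apply/idP/idP; apply: sym.
case/iso2P=> -[fV fH fS [gV fgV gfV] [gH fgH gfH] [gS fgS gfS] Hnu Hio Hmu Hs1 Hs2].
apply/iso2P; constructor; apply: (@Iso2Maps H' G' gV gH gS);
  try by [exists fV | exists fH | exists fS].
- by move=> h; apply: (can_inj fgV); rewrite Hnu !gfH.
- by move=> h; apply: (can_inj fgH); rewrite Hio !gfH.
- by move=> s; apply: (can_inj fgH); rewrite Hmu !gfS gfH.
- by move=> s; apply: (can_inj fgS); rewrite Hs1 !gfS.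
- by move=> s; apply: (can_inj fgS); rewrite Hs2 !gfS.
Qed.

Lemma iso2_trans G H I : iso2 G H -> iso2 H I -> iso2 G I.
Proof.
case/iso2P=> -[fV fH fS bV bH bS Hnu Hio Hmu Hs1 Hs2].
case/iso2P=> -[fV' fH' fS' bV' bH' bS' Hnu' Hio' Hmu' Hs1' Hs2'].
apply/iso2P; constructor; apply: (@Iso2Maps G I (fV' \o fV) (fH' \o fH) (fS' \o fS));
  try exact: bij_comp;
  by move=> x /=; rewrite ?Hnu ?Hnu' ?Hio ?Hio' ?Hmu ?Hmu' ?Hs1 ?Hs1' ?Hs2 ?Hs2'.
Qed.

Lemma iso2_transl G H I : iso2 G H -> iso2 G I = iso2 H I.
Proof.
move=> GH; apply/idP/idP => [GI|]; last exact: iso2_trans.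
by apply: iso2_trans GI; rewrite iso2_sym.
Qed.

Lemma iso2_valid G H : iso2 G H -> valid2 G -> valid2 H.
Proof.
case/iso2P=> -[fV fH fS [gV fgV gfV] [gH fgH gfH] [gS fgS gfS] Hnu Hio Hmu Hs1 Hs2].
case/valid2P=> iK s1K s1F nuF s2K imu s2F.
have eH h : g_iota H h = fH (g_iota G (gH h)) by rewrite Hio gfH.
have eS1 s : g_s1 H s = fS (g_s1 G (gS s)) by rewrite Hs1 gfS.
have eS2 s : g_s2 H s = fS (g_s2 G (gS s)) by rewrite Hs2 gfS.
have eMu s : g_mu H s = fH (g_mu G (gS s)) by rewrite Hmu gfS.
have eNu h : g_nu H h = fV (g_nu G (gH h)) by rewrite Hnu gfH.
have fS_inj := can_inj fgS; have fH_inj := can_inj fgH.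
apply/valid2P; split.
- by move=> h; rewrite !eH fgH iK gfH.
- by move=> s; rewrite !eS1 fgS s1K gfS.
- by move=> s; rewrite eS1 -{2}(gfS s) (inj_eq fS_inj).
- by move=> s; rewrite !eMu !eNu eS1 !fgH fgS nuF.
- by move=> s; rewrite !eS2 fgS s2K gfS.
- by move=> s; rewrite eMu eH fgH imu eMu eS2 fgS.
- by move=> s; rewrite eS2 -{2}(gfS s) (inj_eq fS_inj) s2F eMu eH fgH (inj_eq fH_inj).
Qed.

Lemma sub_iotaE G (K : {set 'I_(nh G)}) h :
  sub_iota K h = if h \in K then g_iota G h else h.
Proof. by rewrite ffunE. Qed.

Lemma sub_s2E G (K : {set 'I_(nh G)}) s :
  sub_s2 K s = if g_mu G s \in K then g_s2 G s else s.
Proof. by rewrite ffunE. Qed.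

(** * Contractions *)

(* [contraction C K] says that C is G / subg K up to relabelling: [ctrV] is the
   quotient map onto the components of K, while [ctrH] and [ctrS] embed the
   half-edges and strand sections of C as the external ones of subg K. *)
Record contraction (C G : graph2) (K : {set 'I_(nh G)}) := Contraction {
  ctrV : 'I_(nv G) -> 'I_(nv C);
  ctrH : 'I_(nh C) -> 'I_(nh G);
  ctrS : 'I_(ns C) -> 'I_(ns G);
  ctrV_surj x : exists v, ctrV v = x;
  ctrV_eq v w : (ctrV v == ctrV w) = connect (compRel K) v w;
  ctrH_inj : injective ctrH;
  ctrS_inj : injective ctrS;
  ctrH_codom h : (h \in codom ctrH) = (h \notin K);
  ctrS_codom s : (s \in codom ctrS) = (g_mu G s \notin K);
  ctr_nu h : g_nu C h = ctrV (g_nu G (ctrH h));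
  ctr_iota h : ctrH (g_iota C h) = g_iota G (ctrH h);
  ctr_mu s : ctrH (g_mu C s) = g_mu G (ctrS s);
  ctr_s1 s : ctrS (g_s1 C s) = faceend K (ctrS s);
  ctr_s2 s : ctrS (g_s2 C s) = g_s2 G (ctrS s) }.

Lemma ctrH_ext C G (K : {set 'I_(nh G)}) (X : contraction C K) h : ctrH X h \notin K.
Proof. by rewrite -(ctrH_codom X) codom_f. Qed.

Lemma ctrS_ext C G (K : {set 'I_(nh G)}) (X : contraction C K) s :
  g_mu G (ctrS X s) \notin K.
Proof. by rewrite -(ctrS_codom X) codom_f. Qed.

Section EdgeSet.
Variables (G : graph2) (vG : valid2 G) (K : {set 'I_(nh G)}) (eK : edgeset K).

Lemma edgeset_iota h : h \in K -> g_iota G h \in K.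
Proof. by move: eK => /forallP /(_ h) /implyP H /H /andP[]. Qed.

Lemma edgeset_iota_neq h : h \in K -> g_iota G h != h.
Proof. by move: eK => /forallP /(_ h) /implyP H /H /andP[]. Qed.

Lemma iota_inE h : (g_iota G h \in K) = (h \in K).
Proof. by apply/idP/idP => [/edgeset_iota|]; rewrite ?valid_iotaK //; apply: edgeset_iota. Qed.

Lemma mu_s2_inE s : (g_mu G (g_s2 G s) \in K) = (g_mu G s \in K).
Proof. by rewrite -valid_iota_mu // iota_inE. Qed.

Lemma sub_s2K : involutive (sub_s2 K).
Proof.
move=> s; rewrite [sub_s2 K s]sub_s2E; case: ifP => sK; rewrite sub_s2E ?sK //.
by rewrite mu_s2_inE sK valid_s2K.
Qed.

Lemma sub_s2_fixed s : (sub_s2 K s == s) = (g_mu G s \notin K).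
Proof.
rewrite sub_s2E; case: ifP => sK; last by rewrite eqxx.
by rewrite valid_s2_fixed //; apply/negbTE/edgeset_iota_neq.
Qed.

Lemma compRel_csym : connect_sym (compRel K).
Proof.
apply: sym_connect_sym.
suff H v w : compRel K v w -> compRel K w v by move=> v w; apply/idP/idP; apply: H.
case/existsP=> h /and3P[hK /eqP hv /eqP hw]; apply/existsP; exists (g_iota G h).
by rewrite edgeset_iota // valid_iotaK // hv hw !eqxx.
Qed.

Local Notation strand_rel := (face_rel (g_s1 G) (sub_s2 K)).

Let card_strands : #|'I_(ns G)| <= ns G. Proof. by rewrite card_ord. Qed.

Lemma faceend_spec s : g_mu G s \notin K ->
  [/\ g_mu G (faceend K s) \notin K, faceend K s != s & connect strand_rel s (faceend K s)].
Proof.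
move=> sK; have gs : sub_s2 K s = s by apply/eqP; rewrite sub_s2_fixed.
have [H1 H2 H3] := face_end_spec (valid_s1K vG) (valid_s1_neq vG) sub_s2K gs card_strands.
by split=> //; rewrite -sub_s2_fixed; apply/eqP.
Qed.

Lemma faceend_uniq s t : g_mu G s \notin K -> g_mu G t \notin K -> t != s ->
  connect strand_rel s t -> t = faceend K s.
Proof.
move=> sK tK; have gs : sub_s2 K s = s by apply/eqP; rewrite sub_s2_fixed.
apply: (face_end_uniq (valid_s1K vG) (valid_s1_neq vG) sub_s2K gs card_strands).
by apply/eqP; rewrite sub_s2_fixed.
Qed.

Lemma faceendK s : g_mu G s \notin K -> faceend K (faceend K s) = s.
Proof.
move=> sK; have [H1 H2 H3] := faceend_spec sK.
apply/esym/faceend_uniq => //; first by rewrite eq_sym.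
by rewrite (face_rel_csym (valid_s1K vG) sub_s2K).
Qed.

Lemma connect_strand_nu x y : connect strand_rel x y ->
  connect (compRel K) (g_nu G (g_mu G x)) (g_nu G (g_mu G y)).
Proof.
apply: (connect_map (m := fun x => g_nu G (g_mu G x))) => {}x {}y /orP[] /eqP ->.
  by rewrite valid_nu_s1 // connect0.
rewrite sub_s2E; case: ifP => xK; last exact: connect0.
by apply: connect1; apply/existsP; exists (g_mu G x); rewrite xK valid_iota_mu // !eqxx.
Qed.

Lemma contr_contraction : contraction (contr K) K.
Proof.
pose qV v := enum_rank_in (root_compR K v) (fingraph.root (compRel K) v).
have ext_h (h : 'I_#|extH K|) : enum_val h \notin K by have := enum_valP h; rewrite inE.
have ext_s (s : 'I_#|extS K|) : g_mu G (enum_val s) \notin K.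
  by have := enum_valP s; rewrite inE.
have codom_enum (T : finType) (A : {set T}) x :
    (x \in codom (@enum_val T (mem A))) = (x \in A).
  apply/codomP/idP => [[i ->]|xA]; first exact: enum_valP.
  by exists (enum_rank_in xA x); rewrite enum_rankK_in.
apply: (@Contraction (contr K) G K qV enum_val enum_val).
- move=> x; have /imsetP[v _ e] := enum_valP x.
  by exists v; apply: enum_val_inj; rewrite enum_rankK_in ?root_compR.
- move=> v w; apply/eqP/idP => [/(congr1 enum_val)|c].
    by rewrite !enum_rankK_in ?root_compR // => /eqP; rewrite root_connect //; apply: compRel_csym.
  apply: enum_val_inj; rewrite !enum_rankK_in ?root_compR //.
  by apply/eqP; rewrite root_connect //; apply: compRel_csym.
- exact: enum_val_inj.
- exact: enum_val_inj.
- by move=> h; rewrite codom_enum inE.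
- by move=> s; rewrite codom_enum inE.
- by move=> h; rewrite /= ffunE; apply: enum_val_inj; rewrite !enum_rankK_in ?root_compR.
- by move=> h; rewrite /= ffunE enum_rankK_in // inE iota_inE ext_h.
- by move=> s; rewrite /= ffunE enum_rankK_in // inE ext_s.
- by move=> s; rewrite /= ffunE enum_rankK_in // inE; have [] := faceend_spec (ext_s s).
- by move=> s; rewrite /= ffunE enum_rankK_in // inE mu_s2_inE ext_s.
Qed.

End EdgeSet.

Section ContractionUnique.
Variables (C C' G : graph2) (K : {set 'I_(nh G)}).
Variables (X : contraction C K) (Y : contraction C' K).

Lemma contraction_maps :
  exists (fV : 'I_(nv C) -> 'I_(nv C')) (fH : 'I_(nh C) -> 'I_(nh C'))
         (fS : 'I_(ns C) -> 'I_(ns C')),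
  [/\ forall v, fV (ctrV X v) = ctrV Y v, forall h, ctrH Y (fH h) = ctrH X h
    & forall s, ctrS Y (fS s) = ctrS X s].
Proof.
have /fin_all_exists[fV HV] x : exists y, forall v, ctrV X v = x -> ctrV Y v = y.
  have [v0 e0] := ctrV_surj X x; exists (ctrV Y v0) => v ev.
  by apply/eqP; rewrite ctrV_eq -(ctrV_eq X) ev e0.
have /fin_all_exists[fH HH] h : exists h', ctrH Y h' = ctrH X h.
  have /codomP[h' ->] : ctrH X h \in codom (ctrH Y) by rewrite ctrH_codom ctrH_ext.
  by exists h'.
have /fin_all_exists[fS HS] s : exists s', ctrS Y s' = ctrS X s.
  have /codomP[s' ->] : ctrS X s \in codom (ctrS Y) by rewrite ctrS_codom ctrS_ext.
  by exists s'.
by exists fV, fH, fS; split=> // v; apply/esym/HV.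
Qed.

End ContractionUnique.

Lemma contraction_iso C C' G (K : {set 'I_(nh G)}) :
  contraction C K -> contraction C' K -> iso2 C C'.
Proof.
move=> X Y; have [fV [fH [fS [HV HH HS]]]] := contraction_maps X Y.
have [gV [gH [gS [GV GH GS]]]] := contraction_maps Y X.
have eHX := @ctrH_inj _ _ _ X; have eSX := @ctrS_inj _ _ _ X.
have eHY := @ctrH_inj _ _ _ Y; have eSY := @ctrS_inj _ _ _ Y.
apply/iso2P; constructor; apply: (@Iso2Maps C C' fV fH fS).
- exists gV => x; first by have [v <-] := ctrV_surj X x; rewrite HV GV.
  by have [v <-] := ctrV_surj Y x; rewrite GV HV.
- by exists gH => x; [apply: eHX | apply: eHY]; rewrite ?GH ?HH.
- by exists gS => x; [apply: eSX | apply: eSY]; rewrite ?GS ?HS.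
- by move=> h; rewrite (ctr_nu X) (ctr_nu Y) HV HH.
- by move=> h; apply: eHY; rewrite HH (ctr_iota X) (ctr_iota Y) HH.
- by move=> s; apply: eHY; rewrite HH (ctr_mu X) (ctr_mu Y) HS.
- by move=> s; apply: eSY; rewrite HS (ctr_s1 X) (ctr_s1 Y) HS.
- by move=> s; apply: eSY; rewrite HS (ctr_s2 X) (ctr_s2 Y) HS.
Qed.

Lemma contraction_valid C G (K : {set 'I_(nh G)}) :
  valid2 G -> edgeset K -> contraction C K -> valid2 C.
Proof.
move=> vG eK X; have eHX := @ctrH_inj _ _ _ X; have eSX := @ctrS_inj _ _ _ X.
apply/valid2P; split.
- by move=> h; apply: eHX; rewrite !(ctr_iota X) valid_iotaK.
- by move=> s; apply: eSX; rewrite !(ctr_s1 X) faceendK // ctrS_ext.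
- move=> s; rewrite -(inj_eq eSX) (ctr_s1 X).
  by have [] := faceend_spec vG eK (ctrS_ext X s).
- move=> s; rewrite !(ctr_nu X) !(ctr_mu X) (ctr_s1 X); apply/eqP; rewrite (ctrV_eq X).
  have [_ _ H] := faceend_spec vG eK (ctrS_ext X s).
  by rewrite compRel_csym //; apply: connect_strand_nu H.
- by move=> s; apply: eSX; rewrite !(ctr_s2 X) valid_s2K.
- by move=> s; apply: eHX; rewrite (ctr_iota X) !(ctr_mu X) (ctr_s2 X) valid_iota_mu.
- move=> s; rewrite -(inj_eq eSX) -(inj_eq eHX) (ctr_s2 X) valid_s2_fixed //.
  by rewrite (ctr_iota X) (ctr_mu X).
Qed.

Lemma faceend_map G H (K : {set 'I_(nh G)}) (K' : {set 'I_(nh H)})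
    (m : 'I_(ns G) -> 'I_(ns H)) :
  valid2 G -> valid2 H -> edgeset K -> edgeset K' -> injective m ->
  (forall x, m (g_s1 G x) = g_s1 H (m x)) ->
  (forall x, m (sub_s2 K x) = sub_s2 K' (m x)) ->
  (forall x, (g_mu H (m x) \in K') = (g_mu G x \in K)) ->
  forall t, g_mu G t \notin K -> m (faceend K t) = faceend K' (m t).
Proof.
move=> vG vH eK eK' m_inj m_s1 m_s2 mK t tK.
have [H1 H2 H3] := faceend_spec vG eK tK.
apply: (faceend_uniq vH eK'); rewrite ?mK ?(inj_eq m_inj) //.
apply: (connect_map (m := m)) H3 => x y /orP[] /eqP ->; apply: connect1.
  by rewrite /= m_s1 eqxx.
by rewrite /= m_s2 eqxx orbT.
Qed.

Lemma connect_strand_sub G (K M : {set 'I_(nh G)}) : K \subset M ->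
  forall x y, connect (face_rel (g_s1 G) (sub_s2 K)) x y ->
              connect (face_rel (g_s1 G) (sub_s2 M)) x y.
Proof.
move=> KM; apply: connect_sub => x y /orP[] /eqP ->; first by rewrite connect1 //= eqxx.
rewrite sub_s2E; case: ifP => xK; last exact: connect0.
by rewrite connect1 //= sub_s2E (subsetP KM _ xK) eqxx orbT.
Qed.

Lemma connect_compRel_sub G (K M : {set 'I_(nh G)}) : K \subset M ->
  forall v w, connect (compRel K) v w -> connect (compRel M) v w.
Proof.
move=> KM; apply: connect_sub => v w /existsP[h /and3P[hK hv hw]].
by apply: connect1; apply/existsP; exists h; rewrite (subsetP KM _ hK) hv hw.
Qed.

Section IteratedContraction.
Variables (G : graph2) (vG : valid2 G) (K : {set 'I_(nh G)}) (eK : edgeset K).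
Variables (C : graph2) (X : contraction C K) (K' : {set 'I_(nh C)}) (eK' : edgeset K').

Let vC : valid2 C := contraction_valid vG eK X.
Let eHX := @ctrH_inj _ _ _ X.
Let eSX := @ctrS_inj _ _ _ X.

Definition lift_edges := K :|: ctrH X @: K'.
Local Notation M := lift_edges.

Lemma ctrH_lift_edgesE y : (ctrH X y \in M) = (y \in K').
Proof. by rewrite inE mem_imset // (negbTE (ctrH_ext X y)). Qed.

Lemma sub_lift_edges : K \subset M.
Proof. by apply/subsetP => h hK; rewrite inE hK. Qed.

Lemma edgeset_lift_edges : edgeset M.
Proof.
apply/forallP => h; apply/implyP; rewrite inE => /orP[hK|].
  by rewrite inE (edgeset_iota eK) // (edgeset_iota_neq eK).
case/imsetP => h' h'K ->.
rewrite -(ctr_iota X) ctrH_lift_edgesE (edgeset_iota eK') //=.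
by rewrite (inj_eq eHX) (edgeset_iota_neq eK').
Qed.

Lemma faceend_lift_edges x : g_mu C x \notin K' ->
  ctrS X (faceend K' x) = faceend M (ctrS X x).
Proof.
move=> xK; have [H1 H2 H3] := faceend_spec vC eK' xK.
apply: (faceend_uniq vG edgeset_lift_edges);
  rewrite -?(ctr_mu X) ?ctrH_lift_edgesE ?(inj_eq eSX) //.
apply: (connect_map (m := ctrS X)) H3 => z y /orP[] /eqP ->.
  rewrite (ctr_s1 X); apply: (connect_strand_sub sub_lift_edges).
  by have [] := faceend_spec vG eK (ctrS_ext X z).
rewrite sub_s2E; case: ifP => zK; last exact: connect0.
by rewrite connect1 //= (ctr_s2 X) sub_s2E -(ctr_mu X) ctrH_lift_edgesE zK eqxx orbT.
Qed.

Lemma connect_compRel_lift_edges v w :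
  connect (compRel K') (ctrV X v) (ctrV X w) = connect (compRel M) v w.
Proof.
have KM := connect_compRel_sub sub_lift_edges.
apply/idP/idP.
  apply: connect_lift (ctrV_surj X) _ _ v w => [a b /eqP|a b].
    by rewrite (ctrV_eq X); apply: KM.
  case/existsP=> h' /and3P[h'K]; rewrite !(ctr_nu X) => /eqP ha /eqP hb.
  move/eqP: ha; rewrite (ctrV_eq X) compRel_csym // => /KM ha.
  move/eqP: hb; rewrite (ctrV_eq X) => /KM hb.
  apply: connect_trans ha (connect_trans _ hb); apply: connect1; apply/existsP.
  by exists (ctrH X h'); rewrite ctrH_lift_edgesE h'K -(ctr_iota X) !eqxx.
apply: (connect_map (m := ctrV X)) => a b /existsP[h /and3P[hM /eqP ha /eqP hb]].
move: hM; rewrite inE => /orP[hK|/imsetP[h' h'K hE]].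
  apply: eq_connect0; apply/eqP; rewrite (ctrV_eq X); apply: connect1.
  by apply/existsP; exists h; rewrite hK ha hb !eqxx.
apply: connect1; apply/existsP; exists h'.
by rewrite h'K !(ctr_nu X) (ctr_iota X) -hE ha hb !eqxx.
Qed.

Lemma contraction_comp D : contraction D K' -> contraction D M.
Proof.
move=> Y; have eHY := @ctrH_inj _ _ _ Y; have eSY := @ctrS_inj _ _ _ Y.
apply: (@Contraction D G M (ctrV Y \o ctrV X) (ctrH X \o ctrH Y) (ctrS X \o ctrS Y)).
- move=> x; have [y <-] := ctrV_surj Y x; have [v <-] := ctrV_surj X y.
  by exists v.
- by move=> v w; rewrite /= (ctrV_eq Y) connect_compRel_lift_edges.
- exact: inj_comp.
- exact: inj_comp.
- move=> h; apply/codomP/idP => [[x ->]|]; first by rewrite /= ctrH_lift_edgesE ctrH_ext.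
  rewrite inE negb_or -(ctrH_codom X) => /andP[/codomP[y ->]].
  by rewrite mem_imset // -(ctrH_codom Y) => /codomP[x ->]; exists x.
- move=> s; apply/codomP/idP => [[x ->]|].
    by rewrite /= -(ctr_mu X) ctrH_lift_edgesE ctrS_ext.
  rewrite inE negb_or -(ctrS_codom X) => /andP[/codomP[y ->]].
  by rewrite -(ctr_mu X) mem_imset // -(ctrS_codom Y) => /codomP[x ->]; exists x.
- by move=> h /=; rewrite (ctr_nu Y) (ctr_nu X).
- by move=> h /=; rewrite (ctr_iota Y) (ctr_iota X).
- by move=> s /=; rewrite (ctr_mu Y) (ctr_mu X).
- by move=> s /=; rewrite (ctr_s1 Y) faceend_lift_edges // ctrS_ext.
- by move=> s /=; rewrite (ctr_s2 Y) (ctr_s2 X).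
Qed.

Lemma contraction_subg :
  contraction (subg K') (K : {set 'I_(nh (subg M))}).
Proof.
have KM := subsetP sub_lift_edges.
have sub_s2_lift y : sub_s2 (K : {set 'I_(nh (subg M))}) y = sub_s2 K y.
  by rewrite !sub_s2E /=; case: ifP => // yK; rewrite sub_s2E KM.
have faceend_subg s : faceend (K : {set 'I_(nh (subg M))}) s = faceend K s.
  by rewrite /faceend /=; apply: eq_iter => x /=; rewrite !sub_s2_lift.
apply: (@Contraction (subg K') (subg M) K (ctrV X) (ctrH X) (ctrS X)).
- exact: (ctrV_surj X).
- move=> v w; rewrite (ctrV_eq X); apply: eq_connect => a b.
  apply/existsP/existsP => -[h /and3P[hK ha hb]]; exists h; rewrite hK ha /=;
    by move: hb; rewrite /= sub_iotaE KM.
- exact: eHX.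
- exact: eSX.
- exact: (ctrH_codom X).
- exact: (ctrS_codom X).
- exact: (ctr_nu X).
- by move=> h /=; rewrite !sub_iotaE ctrH_lift_edgesE; case: ifP => // _; apply: (ctr_iota X).
- exact: (ctr_mu X).
- by move=> s /=; rewrite faceend_subg (ctr_s1 X).
- move=> s /=; rewrite !sub_s2E -(ctr_mu X) ctrH_lift_edgesE.
  by case: ifP => // _; apply: (ctr_s2 X).
Qed.

End IteratedContraction.

Lemma subg_valid G (K : {set 'I_(nh G)}) : valid2 G -> edgeset K -> valid2 (subg K).
Proof.
move=> vG eK; apply/valid2P; split=> /=.
- move=> h; rewrite [sub_iota K h]sub_iotaE; case: ifP => hK; rewrite sub_iotaE ?hK //.
  by rewrite (edgeset_iota eK hK) valid_iotaK.
- exact: valid_s1K.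
- exact: valid_s1_neq.
- exact: valid_nu_s1.
- exact: sub_s2K.
- by move=> s; rewrite sub_iotaE sub_s2E; case: ifP => // _; apply: valid_iota_mu.
- move=> s; rewrite sub_iotaE sub_s2E; case: ifP => hK; rewrite ?eqxx //.
  by rewrite valid_s2_fixed //; apply/negbTE/negbTE/(edgeset_iota_neq eK).
Qed.

Lemma subg_edgeset G (K M : {set 'I_(nh G)}) : edgeset K -> K \subset M ->
  edgeset (K : {set 'I_(nh (subg M))}).
Proof.
move=> eK KM; apply/forallP => h; apply/implyP => hK /=.
by rewrite sub_iotaE (subsetP KM _ hK) (edgeset_iota eK hK) (edgeset_iota_neq eK hK).
Qed.

(* Vertex graphs only involve nu, mu and sigma_1, which subgraphs keep. *)
Lemma inG2_subg V G (M : {set 'I_(nh G)}) : inG2 V G -> edgeset M -> inG2 V (subg M).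
Proof. by case=> vG HV eM; split; [apply: subg_valid | apply: HV]. Qed.

Section IsoTransport.
Variables (G H : graph2) (I : iso2_maps G H).
Local Notation fV := (isoV I).
Local Notation fH := (isoH I).
Local Notation fS := (isoS I).
Let fH_inj : injective fH := bij_inj (isoH_bij I).
Let fS_inj : injective fS := bij_inj (isoS_bij I).

Lemma iso_edgesetE (K : {set 'I_(nh G)}) : edgeset (fH @: K) = edgeset K.
Proof.
apply/forallP/forallP => eK h; apply/implyP.
  move=> hK; move/implyP: (eK (fH h)); rewrite mem_imset // -(iso_iota I).
  by rewrite (mem_imset _ _ fH_inj) (inj_eq fH_inj); apply.
case/imsetP=> h' h'K ->; move/implyP: (eK h') => /(_ h'K) /andP[iK ineq].
by rewrite -(iso_iota I) mem_imset // (inj_eq fH_inj) iK ineq.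
Qed.

Lemma iso_sub_s2 (K : {set 'I_(nh G)}) x : fS (sub_s2 K x) = sub_s2 (fH @: K) (fS x).
Proof. by rewrite !sub_s2E -(iso_mu I) mem_imset //; case: ifP => // _; apply: (iso_s2 I). Qed.

Lemma iso_subg (K : {set 'I_(nh G)}) : iso2 (subg K) (subg (fH @: K)).
Proof.
apply/iso2P; constructor; apply: (@Iso2Maps (subg K) (subg (fH @: K)) fV fH fS).
- exact: (isoV_bij I).
- exact: (isoH_bij I).
- exact: (isoS_bij I).
- exact: (iso_nu I).
- by move=> h /=; rewrite !sub_iotaE mem_imset //; case: ifP => // _; apply: (iso_iota I).
- exact: (iso_mu I).
- exact: (iso_s1 I).
- exact: iso_sub_s2.
Qed.

Variables (vG : valid2 G) (K : {set 'I_(nh G)}) (eK : edgeset K).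
Let vH : valid2 H. Proof. by apply: iso2_valid vG; apply/iso2P; constructor. Qed.
Let eFK : edgeset (fH @: K). Proof. by rewrite iso_edgesetE. Qed.

Lemma contraction_iso_pullback C : contraction C (fH @: K) -> inhabited (contraction C K).
Proof.
move=> X; case: (isoV_bij I) => jV fgV gfV; case: (isoH_bij I) => jH fgH gfH.
case: (isoS_bij I) => jS fgS gfS.
have face_fS t : g_mu G t \notin K -> fS (faceend K t) = faceend (fH @: K) (fS t).
  apply: faceend_map => //; [exact: (iso_s1 I) | exact: iso_sub_s2 |].
  by move=> x; rewrite -(iso_mu I) mem_imset.
constructor; apply: (@Contraction C G K (ctrV X \o fV) (jH \o ctrH X) (jS \o ctrS X)).
- by move=> x; have [w <-] := ctrV_surj X x; exists (jV w); rewrite /= gfV.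
- move=> v w; rewrite /= (ctrV_eq X); apply/idP/idP => Hc.
    rewrite -(fgV v) -(fgV w); apply: (connect_map (m := jV)) Hc => a b.
    case/existsP=> h' /and3P[/imsetP[h hK ->] /eqP ha /eqP hb].
    apply: connect1; apply/existsP; exists h.
    by rewrite hK -ha -hb -(iso_iota I) -!(iso_nu I) !fgV !eqxx.
  apply: (connect_map (m := fV)) Hc => a b /existsP[h /and3P[hK /eqP ha /eqP hb]].
  apply: connect1; apply/existsP; exists (fH h).
  by rewrite mem_imset // hK -(iso_iota I) -!(iso_nu I) ha hb !eqxx.
- exact: (inj_comp (can_inj gfH) (@ctrH_inj _ _ _ X)).
- exact: (inj_comp (can_inj gfS) (@ctrS_inj _ _ _ X)).
- move=> h; apply/codomP/idP => [[x ->]|hK].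
    by rewrite /= -(mem_imset _ _ fH_inj) gfH ctrH_ext.
  have /codomP[x hx] : fH h \in codom (ctrH X) by rewrite (ctrH_codom X) mem_imset.
  by exists x; rewrite /= -hx fgH.
- move=> s; apply/codomP/idP => [[x ->]|sK].
    by rewrite /= -(mem_imset _ _ fH_inj) (iso_mu I) gfS ctrS_ext.
  have /codomP[x sx] : fS s \in codom (ctrS X) by rewrite (ctrS_codom X) -(iso_mu I) mem_imset.
  by exists x; rewrite /= -sx fgS.
- by move=> h /=; rewrite (ctr_nu X) -{1}(gfH (ctrH X h)) -(iso_nu I).
- by move=> h /=; rewrite (ctr_iota X) -{1}(gfH (ctrH X h)) -(iso_iota I) fgH.
- by move=> s /=; rewrite (ctr_mu X) -{1}(gfS (ctrS X s)) -(iso_mu I) fgH.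
- move=> s /=; rewrite (ctr_s1 X); apply: fS_inj; rewrite gfS face_fS ?gfS //.
  by rewrite -(mem_imset _ _ fH_inj) (iso_mu I) gfS ctrS_ext.
- by move=> s /=; rewrite (ctr_s2 X) -{1}(gfS (ctrS X s)) -(iso_s2 I) fgS.
Qed.

Lemma iso_contr : iso2 (contr K) (contr (fH @: K)).
Proof.
have [Y] := contraction_iso_pullback (contr_contraction vH eFK).
exact: contraction_iso (contr_contraction vG eK) Y.
Qed.

End IsoTransport.

(** * Disjoint unions *)

Lemma ord_sum_ind m n (P : 'I_(m + n) -> Prop) :
  (forall x, P (lshift n x)) -> (forall y, P (rshift m y)) -> forall z, P z.
Proof. by move=> HL HR z; case: (split_ordP z) => [x ->|y ->]. Qed.

Section SumMaps.
Variables (a b c d : nat) (f : 'I_a -> 'I_b) (g : 'I_c -> 'I_d).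

Lemma sumf_lshift x : sumf f g (lshift c x) = lshift d (f x).
Proof. by rewrite /sumf (unsplitK (inl _ x)). Qed.

Lemma sumf_rshift y : sumf f g (rshift a y) = rshift b (g y).
Proof. by rewrite /sumf (unsplitK (inr _ y)). Qed.

Lemma sumf_inj : injective f -> injective g -> injective (sumf f g).
Proof.
move=> f_inj g_inj; elim/ord_sum_ind => x; elim/ord_sum_ind => y;
  rewrite ?sumf_lshift ?sumf_rshift => /eqP; rewrite ?eq_shift // => /eqP e;
  by rewrite ?(f_inj _ _ e) ?(g_inj _ _ e).
Qed.

Lemma codom_sumf_lshift x : (lshift d x \in codom (sumf f g)) = (x \in codom f).
Proof.
apply/codomP/codomP => [[z]|[z ->]]; last by exists (lshift c z); rewrite sumf_lshift.
by elim/ord_sum_ind: z => z; rewrite ?sumf_lshift ?sumf_rshift => /eqP;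
  rewrite ?eq_shift // => /eqP ->; exists z.
Qed.

Lemma codom_sumf_rshift y : (rshift b y \in codom (sumf f g)) = (y \in codom g).
Proof.
apply/codomP/codomP => [[z]|[z ->]]; last by exists (rshift a z); rewrite sumf_rshift.
by elim/ord_sum_ind: z => z; rewrite ?sumf_lshift ?sumf_rshift => /eqP;
  rewrite ?eq_shift // => /eqP ->; exists z.
Qed.

End SumMaps.

Lemma sumf_bij a b c d (f : 'I_a -> 'I_b) (g : 'I_c -> 'I_d) :
  bijective f -> bijective g -> bijective (sumf f g).
Proof.
case=> f' f1 f2 [g' g1 g2]; exists (sumf f' g');
  by elim/ord_sum_ind => x; rewrite ?sumf_lshift ?sumf_rshift ?f1 ?g1 ?f2 ?g2.
Qed.

Section DisjointUnion.
Variables G H : graph2.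
Local Notation D := (dunion G H).

Lemma dunion_nuL h : g_nu D (lshift _ h) = lshift _ (g_nu G h).
Proof. by rewrite ffunE sumf_lshift. Qed.
Lemma dunion_nuR h : g_nu D (rshift _ h) = rshift _ (g_nu H h).
Proof. by rewrite ffunE sumf_rshift. Qed.
Lemma dunion_iotaL h : g_iota D (lshift _ h) = lshift _ (g_iota G h).
Proof. by rewrite ffunE sumf_lshift. Qed.
Lemma dunion_iotaR h : g_iota D (rshift _ h) = rshift _ (g_iota H h).
Proof. by rewrite ffunE sumf_rshift. Qed.
Lemma dunion_muL s : g_mu D (lshift _ s) = lshift _ (g_mu G s).
Proof. by rewrite ffunE sumf_lshift. Qed.
Lemma dunion_muR s : g_mu D (rshift _ s) = rshift _ (g_mu H s).
Proof. by rewrite ffunE sumf_rshift. Qed.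
Lemma dunion_s1L s : g_s1 D (lshift _ s) = lshift _ (g_s1 G s).
Proof. by rewrite ffunE sumf_lshift. Qed.
Lemma dunion_s1R s : g_s1 D (rshift _ s) = rshift _ (g_s1 H s).
Proof. by rewrite ffunE sumf_rshift. Qed.
Lemma dunion_s2L s : g_s2 D (lshift _ s) = lshift _ (g_s2 G s).
Proof. by rewrite ffunE sumf_lshift. Qed.
Lemma dunion_s2R s : g_s2 D (rshift _ s) = rshift _ (g_s2 H s).
Proof. by rewrite ffunE sumf_rshift. Qed.

End DisjointUnion.

Definition dunionE := (dunion_nuL, dunion_nuR, dunion_iotaL, dunion_iotaR,
  dunion_muL, dunion_muR, dunion_s1L, dunion_s1R, dunion_s2L, dunion_s2R).

Lemma dunion_valid G H : valid2 G -> valid2 H -> valid2 (dunion G H).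
Proof.
move=> vG vH; apply/valid2P; split; elim/ord_sum_ind => x; rewrite !dunionE ?eq_shift;
  by [rewrite valid_iotaK | rewrite valid_s1K | rewrite valid_s1_neq | rewrite valid_nu_s1
     | rewrite valid_s2K | rewrite valid_iota_mu | rewrite valid_s2_fixed].
Qed.

Lemma iso2_dunion G G' H H' :
  iso2 G G' -> iso2 H H' -> iso2 (dunion G H) (dunion G' H').
Proof.
case/iso2P=> -[fV fH fS bV bH bS Hnu Hio Hmu Hs1 Hs2].
case/iso2P=> -[fV' fH' fS' bV' bH' bS' Hnu' Hio' Hmu' Hs1' Hs2'].
apply/iso2P; constructor.
apply: (@Iso2Maps (dunion G H) (dunion G' H') (sumf fV fV') (sumf fH fH') (sumf fS fS'));
  try exact: sumf_bij; elim/ord_sum_ind => x;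
  by rewrite !dunionE ?sumf_lshift ?sumf_rshift !dunionE
             ?Hnu ?Hnu' ?Hio ?Hio' ?Hmu ?Hmu' ?Hs1 ?Hs1' ?Hs2 ?Hs2'.
Qed.

Section UnionEdges.
Variables (G H : graph2) (K1 : {set 'I_(nh G)}) (K2 : {set 'I_(nh H)}).
Local Notation D := (dunion G H).

Definition union_edges : {set 'I_(nh D)} :=
  @lshift (nh G) (nh H) @: K1 :|: @rshift (nh G) (nh H) @: K2.
Local Notation U := union_edges.

Lemma union_edgesL x : (lshift _ x \in U) = (x \in K1).
Proof.
rewrite inE mem_imset; last exact: lshift_inj.
by case: (x \in K1) => //=; apply/imsetP => -[y _ /eqP]; rewrite eq_shift.
Qed.

Lemma union_edgesR x : (rshift _ x \in U) = (x \in K2).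
Proof.
rewrite inE (mem_imset _ _ (@rshift_inj _ _)) orbC.
by case: (x \in K2) => //=; apply/imsetP => -[y _ /eqP]; rewrite eq_shift.
Qed.

Lemma sub_s2_union_edgesL s : sub_s2 U (lshift _ s) = lshift _ (sub_s2 K1 s).
Proof. by rewrite !sub_s2E dunion_muL union_edgesL; case: ifP; rewrite ?dunion_s2L. Qed.
Lemma sub_s2_union_edgesR s : sub_s2 U (rshift _ s) = rshift _ (sub_s2 K2 s).
Proof. by rewrite !sub_s2E dunion_muR union_edgesR; case: ifP; rewrite ?dunion_s2R. Qed.
Lemma sub_iota_union_edgesL h : sub_iota U (lshift _ h) = lshift _ (sub_iota K1 h).
Proof. by rewrite !sub_iotaE union_edgesL; case: ifP; rewrite ?dunion_iotaL. Qed.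
Lemma sub_iota_union_edgesR h : sub_iota U (rshift _ h) = rshift _ (sub_iota K2 h).
Proof. by rewrite !sub_iotaE union_edgesR; case: ifP; rewrite ?dunion_iotaR. Qed.

Lemma edgeset_union_edges : edgeset U = edgeset K1 && edgeset K2.
Proof.
apply/idP/andP => [/forallP eU|[eK1 eK2]].
  split; apply/forallP => h; apply/implyP => hK.
    by move: (eU (lshift _ h)); rewrite union_edgesL hK /= dunion_iotaL union_edgesL eq_shift.
  by move: (eU (rshift _ h)); rewrite union_edgesR hK /= dunion_iotaR union_edgesR eq_shift.
apply/forallP; elim/ord_sum_ind => h; apply/implyP.
  rewrite union_edgesL => hK; rewrite dunion_iotaL union_edgesL eq_shift.
  by rewrite (edgeset_iota eK1) ?(edgeset_iota_neq eK1).
rewrite union_edgesR => hK; rewrite dunion_iotaR union_edgesR eq_shift.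
by rewrite (edgeset_iota eK2) ?(edgeset_iota_neq eK2).
Qed.

Lemma subg_union_edges : iso2 (subg U) (dunion (subg K1) (subg K2)).
Proof.
apply/iso2P; constructor.
apply: (@Iso2Maps (subg U) (dunion (subg K1) (subg K2)) id id id); try exact: inv_bij;
  elim/ord_sum_ind => x; rewrite [RHS]ffunE ?sumf_lshift ?sumf_rshift //=;
  by rewrite ?dunionE ?sub_iota_union_edgesL ?sub_iota_union_edgesR
             ?sub_s2_union_edgesL ?sub_s2_union_edgesR.
Qed.

Lemma connect_union_edgesL a b :
  connect (compRel K1) a b -> connect (compRel U) (lshift _ a) (lshift _ b).
Proof.
apply: (connect_map (m := @lshift _ _)) => x y /existsP[h /and3P[hK hx hy]].
apply: connect1; apply/existsP; exists (lshift _ h).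
by rewrite union_edgesL hK !dunionE !eq_shift hx hy.
Qed.

Lemma connect_union_edgesR a b :
  connect (compRel K2) a b -> connect (compRel U) (rshift _ a) (rshift _ b).
Proof.
apply: (connect_map (m := @rshift _ _)) => x y /existsP[h /and3P[hK hx hy]].
apply: connect1; apply/existsP; exists (rshift _ h).
by rewrite union_edgesR hK !dunionE !eq_shift hx hy.
Qed.

Variables (vG : valid2 G) (vH : valid2 H) (eK1 : edgeset K1) (eK2 : edgeset K2).
Variables (C1 C2 : graph2) (X1 : contraction C1 K1) (X2 : contraction C2 K2).

Lemma sumf_ctrV_eq v w :
  (sumf (ctrV X1) (ctrV X2) v == sumf (ctrV X1) (ctrV X2) w) = connect (compRel U) v w.
Proof.
apply/idP/idP; last first.
  move=> Hc; apply/eqP; apply: connect_fun_eq Hc => a b.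
  case/existsP=> h /and3P[hU /eqP <- /eqP <-].
  elim/ord_sum_ind: h hU => h; rewrite ?union_edgesL ?union_edgesR => hK;
    rewrite !dunionE ?sumf_lshift ?sumf_rshift; congr (_ _); apply/eqP;
    rewrite ?(ctrV_eq X1) ?(ctrV_eq X2); apply: connect1;
    by apply/existsP; exists h; rewrite hK !eqxx.
elim/ord_sum_ind: v => v; elim/ord_sum_ind: w => w;
  rewrite ?sumf_lshift ?sumf_rshift ?eq_shift //.
  by rewrite (ctrV_eq X1); apply: connect_union_edgesL.
by rewrite (ctrV_eq X2); apply: connect_union_edgesR.
Qed.

Lemma contraction_dunion : contraction (dunion C1 C2) U.
Proof.
have eU : edgeset U by rewrite edgeset_union_edges eK1 eK2.
apply: (@Contraction (dunion C1 C2) D U (sumf (ctrV X1) (ctrV X2))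
          (sumf (ctrH X1) (ctrH X2)) (sumf (ctrS X1) (ctrS X2))).
- elim/ord_sum_ind => x.
    by have [v <-] := ctrV_surj X1 x; exists (lshift _ v); rewrite sumf_lshift.
  by have [v <-] := ctrV_surj X2 x; exists (rshift _ v); rewrite sumf_rshift.
- exact: sumf_ctrV_eq.
- exact: (sumf_inj (@ctrH_inj _ _ _ X1) (@ctrH_inj _ _ _ X2)).
- exact: (sumf_inj (@ctrS_inj _ _ _ X1) (@ctrS_inj _ _ _ X2)).
- elim/ord_sum_ind => h.
    by rewrite codom_sumf_lshift union_edgesL (ctrH_codom X1).
  by rewrite codom_sumf_rshift union_edgesR (ctrH_codom X2).
- elim/ord_sum_ind => s.
    by rewrite codom_sumf_lshift dunion_muL union_edgesL (ctrS_codom X1).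
  by rewrite codom_sumf_rshift dunion_muR union_edgesR (ctrS_codom X2).
- by elim/ord_sum_ind => h; rewrite !dunionE ?sumf_lshift ?sumf_rshift !dunionE
    ?sumf_lshift ?sumf_rshift ?(ctr_nu X1) ?(ctr_nu X2).
- by elim/ord_sum_ind => h; rewrite !dunionE ?sumf_lshift ?sumf_rshift !dunionE
    ?sumf_lshift ?sumf_rshift ?(ctr_iota X1) ?(ctr_iota X2).
- by elim/ord_sum_ind => h; rewrite !dunionE ?sumf_lshift ?sumf_rshift !dunionE
    ?sumf_lshift ?sumf_rshift ?(ctr_mu X1) ?(ctr_mu X2).
- have vD := dunion_valid vG vH.
  elim/ord_sum_ind => s; rewrite !dunionE ?sumf_lshift ?sumf_rshift.
    rewrite (ctr_s1 X1); apply: faceend_map (ctrS_ext X1 s) => //;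
      by [exact: lshift_inj | move=> x; rewrite ?dunionE ?sub_s2_union_edgesL ?union_edgesL].
  rewrite (ctr_s1 X2); apply: faceend_map (ctrS_ext X2 s) => //;
    by [exact: rshift_inj | move=> x; rewrite ?dunionE ?sub_s2_union_edgesR ?union_edgesR].
- by elim/ord_sum_ind => h; rewrite !dunionE ?sumf_lshift ?sumf_rshift !dunionE
    ?sumf_lshift ?sumf_rshift ?(ctr_s2 X1) ?(ctr_s2 X2).
Qed.

End UnionEdges.

Lemma contr_union_edges G H (K1 : {set 'I_(nh G)}) (K2 : {set 'I_(nh H)}) :
  valid2 G -> valid2 H -> edgeset K1 -> edgeset K2 ->
  iso2 (contr (union_edges K1 K2)) (dunion (contr K1) (contr K2)).
Proof.
move=> vG vH e1 e2.
have eU : edgeset (union_edges K1 K2) by rewrite edgeset_union_edges e1 e2.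
apply: contraction_iso (contr_contraction (dunion_valid vG vH) eU) _.
exact: contraction_dunion (contr_contraction vG e1) (contr_contraction vH e2).
Qed.

(** * Formal linear combinations and the coproduct *)

Import GRing.Theory.
Local Open Scope ring_scope.

Lemma eq_bigr_all (T : Type) (a : pred T) (s : seq T) (F1 F2 : T -> rat) :
  all a s -> (forall x, a x -> F1 x = F2 x) ->
  \sum_(x <- s) F1 x = \sum_(x <- s) F2 x.
Proof.
move=> + eqF; elim: s => [|x s IH] /=; first by rewrite !big_nil.
by case/andP=> ax /IH eqs; rewrite !big_cons eqF // eqs.
Qed.

(* [coef] and [coef2] are the [class_coef] of [iso2] and of [pair_iso]. *)
Section ClassSums.
Variables (T : Type) (R : T -> T -> bool) (P : pred T) (F : T -> rat).
Hypotheses (Rrefl : forall x, R x x) (Rsym : forall x y, R x y = R y x)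
  (Rtrans : forall x y z, R x y -> R y z -> R x z)
  (F_inv : forall x y, P x -> P y -> R x y -> F x = F y).

Definition class_coef (s : seq (rat * T)) x := \sum_(p <- s | R p.2 x) p.1.

Let wsum (s : seq (rat * T)) := \sum_(p <- s) p.1 * F p.2.

Lemma class_coef_others s x y :
  class_coef [seq p <- s | ~~ R p.2 x] y = if R y x then 0 else class_coef s y.
Proof.
rewrite /class_coef big_filter_cond; case: ifP => Ryx.
  by rewrite big1 // => p /andP[nR Rp]; move: nR; rewrite (Rtrans Rp Ryx).
apply: eq_bigl => p; case Rp: (R p.2 y); rewrite ?andbF ?andbT //.
by apply/negP => Rpx; move: Ryx; rewrite Rsym in Rp; rewrite (Rtrans Rp Rpx).
Qed.

Lemma wsum_split s x : P x -> all (fun p => P p.2) s ->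
  wsum s = class_coef s x * F x + wsum [seq p <- s | ~~ R p.2 x].
Proof.
move=> Px Ps; rewrite /wsum (bigID (fun p => R p.2 x)) /= big_filter; congr (_ + _).
rewrite /class_coef big_distrl /=; elim: s Ps => [|p s IH] /=; first by rewrite !big_nil.
by case/andP=> Pp /IH; rewrite !big_cons; case: ifP => // Rp ->; rewrite (F_inv Pp Px Rp).
Qed.

Lemma eq_sum_of_class_coef s s' : all (fun p => P p.2) s -> all (fun p => P p.2) s' ->
  (forall x, class_coef s x = class_coef s' x) -> wsum s = wsum s'.
Proof.
move: {2}(size s + size s')%N (leqnn (size s + size s')) => n.
elim: n s s' => [|n IH] s s'.
  by case: s => //; case: s' => // _ _ _ _; rewrite /wsum !big_nil.
move=> Hn Ps Ps' Hc.
have drop_class x : P x ->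
    (size [seq p <- s | ~~ R p.2 x] + size [seq p <- s' | ~~ R p.2 x] <= n)%N ->
    wsum s = wsum s'.
  move=> Px Hx; rewrite (wsum_split Px Ps) (wsum_split Px Ps') Hc; congr (_ + _).
  apply: IH => //; last by move=> y; rewrite !class_coef_others Hc.
    by rewrite all_filter; apply: sub_all Ps => p /= ->; rewrite implybT.
  by rewrite all_filter; apply: sub_all Ps' => p /= ->; rewrite implybT.
have shrink x (t : seq (rat * T)) : (size [seq p <- t | ~~ R p.2 x] <= size t)%N.
  by rewrite size_filter count_size.
case: s Hn Ps Hc drop_class => [|p0 s1] Hn Ps Hc drop_class.
  case: s' Hn Ps' Hc drop_class => [|q0 s1'] Hn Ps' Hc drop_class; first by rewrite /wsum !big_nil.
  apply: (drop_class q0.2); first by case/andP: Ps'.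
  by rewrite /= Rrefl /=; have := shrink q0.2 s1'; move: Hn => /=; lia.
apply: (drop_class p0.2); first by case/andP: Ps.
rewrite /= Rrefl /=; have := shrink p0.2 s1; have := shrink p0.2 s'.
by move: Hn => /=; lia.
Qed.

End ClassSums.

Definition eval2 (F : graph2 * graph2 -> rat) (t : vec2) : rat := \sum_(z <- t) z.1 * F z.2.

Definition pair_iso (x y : graph2 * graph2) := iso2 x.1 y.1 && iso2 x.2 y.2.

Definition pair_invariant (F : graph2 * graph2 -> rat) :=
  forall x y, pair_iso x y -> F x = F y.

Definition ind2 (a b : graph2) (x : graph2 * graph2) : rat := (pair_iso x (a, b))%:R.

Lemma coef2E t a b : coef2 t a b = eval2 (ind2 a b) t.
Proof.
rewrite /coef2 big_mkcond; apply: eq_bigr => p _ /=.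
by rewrite /ind2 /pair_iso; case: ifP; rewrite ?mulr1 ?mulr0.
Qed.

Lemma pair_iso_refl x : pair_iso x x.
Proof. by rewrite /pair_iso !iso2_refl. Qed.

Lemma pair_iso_sym x y : pair_iso x y = pair_iso y x.
Proof. by rewrite /pair_iso iso2_sym [iso2 x.2 _]iso2_sym. Qed.

Lemma pair_iso_trans x y z : pair_iso x y -> pair_iso y z -> pair_iso x z.
Proof. by case/andP=> a b /andP[c d]; rewrite /pair_iso (iso2_trans a c) (iso2_trans b d). Qed.

Lemma ind2_invariant a b : pair_invariant (ind2 a b).
Proof.
by move=> x y /andP[e1 e2]; rewrite /ind2 /pair_iso (iso2_transl _ e1) (iso2_transl _ e2).
Qed.

Lemma eval2_veq2 t t' F : pair_invariant F -> veq2 t t' -> eval2 F t = eval2 F t'.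
Proof.
move=> F_inv e; apply: (@eq_sum_of_class_coef _ pair_iso predT) => //.
- exact: pair_iso_refl.
- exact: pair_iso_sym.
- exact: pair_iso_trans.
- by move=> x y _ _; apply: F_inv.
- exact: all_predT.
- exact: all_predT.
- by case=> a b; apply: e.
Qed.

Lemma eval2_flatten (X : Type) F (s : seq X) (c : X -> rat) (L : X -> vec2) :
  eval2 F (flatten [seq [seq (c x * q.1, q.2) | q <- L x] | x <- s]) =
  \sum_(x <- s) c x * eval2 F (L x).
Proof.
rewrite /eval2 big_flatten big_map; apply: eq_bigr => x _.
by rewrite big_map mulr_sumr; apply: eq_bigr => q _ /=; rewrite mulrA.
Qed.

Lemma eval2_Delta F u : eval2 F (Delta u) = \sum_(p <- u) p.1 * eval2 F (cop1 p.2).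
Proof. exact: eval2_flatten. Qed.

Lemma eval2_cop1 F G :
  eval2 F (cop1 G) = \sum_(K : {set 'I_(nh G)} | edgeset K) F (subg K, contr K).
Proof.
rewrite /eval2 /cop1 big_map big_enum /=.
by apply: eq_big => [K|K _]; rewrite ?inE ?mul1r.
Qed.

Lemma eval2_tens F u v :
  eval2 F (tens u v) = \sum_(p <- u) \sum_(q <- v) p.1 * q.1 * F (p.2, q.2).
Proof. by rewrite /eval2 /tens big_allpairs_dep. Qed.

Lemma eval2_cat F t t' : eval2 F (t ++ t') = eval2 F t + eval2 F t'.
Proof. by rewrite /eval2 big_cat. Qed.

Lemma eval2_cop1_iso F G H : pair_invariant F -> valid2 G -> iso2 G H ->
  eval2 F (cop1 G) = eval2 F (cop1 H).
Proof.
move=> F_inv vG /iso2P[I]; rewrite !eval2_cop1.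
have [jH fgH gfH] := isoH_bij I.
rewrite (reindex (fun K : {set 'I_(nh G)} => isoH I @: K)) /=; last first.
  exists (fun K : {set 'I_(nh H)} => jH @: K) => K _;
    by rewrite -imset_comp ?(eq_imset _ fgH) ?(eq_imset _ gfH) imset_id.
apply: eq_big => [K|K eK]; first by rewrite iso_edgesetE.
by apply: F_inv; rewrite /pair_iso iso_subg iso_contr.
Qed.

Lemma Delta_veq u v : valid_vec u -> valid_vec v -> veq u v -> veq2 (Delta u) (Delta v).
Proof.
move=> vu vv e a b; rewrite !coef2E !eval2_Delta.
apply: (@eq_sum_of_class_coef _ iso2 valid2 (fun g => eval2 (ind2 a b) (cop1 g))) => //.
- exact: iso2_refl.
- exact: iso2_sym.
- exact: iso2_trans.
- by move=> x y vx _; apply: eval2_cop1_iso (ind2_invariant a b) vx.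
Qed.

Lemma eval2_cop1_dunion F G H : pair_invariant F -> valid2 G -> valid2 H ->
  eval2 F (cop1 (dunion G H)) =
  \sum_(K1 : {set 'I_(nh G)} | edgeset K1) \sum_(K2 : {set 'I_(nh H)} | edgeset K2)
     F (dunion (subg K1) (subg K2), dunion (contr K1) (contr K2)).
Proof.
move=> F_inv vG vH; rewrite eval2_cop1 pair_big /=.
rewrite (reindex (fun p : {set 'I_(nh G)} * {set 'I_(nh H)} => union_edges p.1 p.2)) /=.
  apply: eq_big => [p|p]; rewrite edgeset_union_edges // => /andP[e1 e2].
  by apply: F_inv; rewrite /pair_iso subg_union_edges contr_union_edges.
exists (fun K : {set 'I_(nh (dunion G H))} =>
          ([set x | lshift _ x \in K], [set y | rshift _ y \in K])) => [[K1 K2]|K] _ /=.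
  by congr pair; apply/setP => x; rewrite inE ?union_edgesL ?union_edgesR.
by apply/setP; elim/ord_sum_ind => x; rewrite ?union_edgesL ?union_edgesR inE.
Qed.

Definition vmul2 (X Y : vec2) : vec2 :=
  [seq (x.1 * y.1, (dunion x.2.1 y.2.1, dunion x.2.2 y.2.2)) | x <- X, y <- Y].

Lemma eval2_vmul2 F X Y : eval2 F (vmul2 X Y) =
  eval2 (fun x2 => eval2 (fun y2 => F (dunion x2.1 y2.1, dunion x2.2 y2.2)) Y) X.
Proof.
rewrite /eval2 /vmul2 big_allpairs_dep; apply: eq_bigr => x _ /=.
by rewrite mulr_sumr; apply: eq_bigr => y _; rewrite mulrA.
Qed.

Lemma eval2_vmul2r F X Y : eval2 F (vmul2 X Y) =
  eval2 (fun y2 => eval2 (fun x2 => F (dunion x2.1 y2.1, dunion x2.2 y2.2)) X) Y.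
Proof.
rewrite /eval2 /vmul2 big_allpairs_dep exchange_big; apply: eq_bigr => y _ /=.
by rewrite mulr_sumr; apply: eq_bigr => x _; rewrite mulrA [y.1 * _]mulrC.
Qed.

Lemma pair_iso_dunion x y x' y' : pair_iso x x' -> pair_iso y y' ->
  pair_iso (dunion x.1 y.1, dunion x.2 y.2) (dunion x'.1 y'.1, dunion x'.2 y'.2).
Proof.
by case/andP=> ex1 ex2 /andP[ey1 ey2]; rewrite /pair_iso !iso2_dunion.
Qed.

Lemma vmul2_veq2 X X' Y Y' : veq2 X X' -> veq2 Y Y' -> veq2 (vmul2 X Y) (vmul2 X' Y').
Proof.
move=> eX eY a b; rewrite !coef2E eval2_vmul2 (eval2_veq2 _ eX); last first.
  move=> x x' ex; apply: eq_bigr => y _; congr (_ * _).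
  by apply: ind2_invariant; apply: pair_iso_dunion ex (pair_iso_refl _).
rewrite -eval2_vmul2 !eval2_vmul2r (eval2_veq2 _ eY) // => y y' ey.
apply: eq_bigr => x _; congr (_ * _).
by apply: ind2_invariant; apply: pair_iso_dunion (pair_iso_refl _) ey.
Qed.

Lemma Delta_vmul u v : valid_vec u -> valid_vec v ->
  veq2 (Delta (vmul u v)) (vmul2 (Delta u) (Delta v)).
Proof.
move=> vu vv a b; rewrite !coef2E eval2_vmul2 !eval2_Delta /vmul big_allpairs_dep /=.
apply: (eq_bigr_all vu) => p vp; rewrite eval2_cop1 mulr_sumr.
under [RHS]eq_bigr => K1 _ do rewrite /= eval2_Delta mulr_sumr.
rewrite [RHS]exchange_big; apply: (eq_bigr_all vv) => q vq /=.
rewrite (eval2_cop1_dunion (@ind2_invariant a b)) // -mulrA !mulr_sumr.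
apply: eq_bigr => K1 _; rewrite eval2_cop1 !mulr_sumr.
by apply: eq_bigr => K2 _; rewrite mulrA.
Qed.

(* [in_tensor A t] says that [veq2 t (tcomb ab)] for some [ab] with factors in A. *)
Definition tcomb (ab : seq (rat * (vec * vec))) : vec2 :=
  flatten [seq [seq (p.1 * q.1, q.2) | q <- tens p.2.1 p.2.2] | p <- ab].

Definition tcomb_mul (ab cd : seq (rat * (vec * vec))) : seq (rat * (vec * vec)) :=
  [seq (p.1 * q.1, (vmul p.2.1 q.2.1, vmul p.2.2 q.2.2)) | p <- ab, q <- cd].

Lemma eval2_vmul2_tens F a1 a2 b1 b2 :
  eval2 F (vmul2 (tens a1 a2) (tens b1 b2)) = eval2 F (tens (vmul a1 b1) (vmul a2 b2)).
Proof.
rewrite /eval2 /vmul2 big_allpairs_dep {1}/tens big_allpairs_dep.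
under eq_bigr => x1 _ do under eq_bigr => y1 _ do rewrite /tens big_allpairs_dep.
rewrite /tens /vmul !big_allpairs_dep.
under [RHS]eq_bigr => x1 _ do under eq_bigr => y1 _ do rewrite big_allpairs_dep.
apply: eq_bigr => x1 _ /=; rewrite [LHS]exchange_big /=; apply: eq_bigr => x2 _.
apply: eq_bigr => y1 _; apply: eq_bigr => y2 _ /=.
by rewrite !mulrA; congr (_ * _); rewrite -!mulrA; congr (_ * _); rewrite mulrCA.
Qed.

Lemma vmul2_tcomb ab cd : veq2 (vmul2 (tcomb ab) (tcomb cd)) (tcomb (tcomb_mul ab cd)).
Proof.
move=> a b; rewrite !coef2E eval2_vmul2 !eval2_flatten /tcomb_mul big_allpairs_dep.
apply: eq_bigr => p _; rewrite -eval2_vmul2 eval2_vmul2r eval2_flatten mulr_sumr.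
by apply: eq_bigr => q _; rewrite -eval2_vmul2r eval2_vmul2_tens mulrA.
Qed.

(** * Subalgebras closed under the coproduct *)

Lemma valid_empty2 : valid2 empty2.
Proof. by apply/valid2P; split; case. Qed.

Lemma valid_vec_cat u v : valid_vec u -> valid_vec v -> valid_vec (u ++ v).
Proof. by rewrite /valid_vec all_cat => -> ->. Qed.

Lemma valid_vec_scale c u : valid_vec u -> valid_vec (vscale c u).
Proof. by rewrite /valid_vec /vscale all_map. Qed.

Lemma valid_vec_mul u v : valid_vec u -> valid_vec v -> valid_vec (vmul u v).
Proof.
elim: u => //= p u IH /andP[vp vu] vv; rewrite /vmul allpairs_cons.
apply: valid_vec_cat (IH vu vv); rewrite /valid_vec all_map.
by apply: sub_all vv => q /= vq; apply: dunion_valid.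
Qed.

Lemma veq_basis g g' : iso2 g g' -> veq (vbasis g) (vbasis g').
Proof. by move=> e h; rewrite /coef !big_cons !big_nil /= (iso2_transl _ e). Qed.

Section GeneratedSubalgebra.
Variable S : graph2 -> Prop.
Local Notation A := (gen_subalg S).

Lemma gen_subalg_basis g : valid2 g -> S g -> A (vbasis g).
Proof. by move=> vg Sg; split=> [|P _]; [rewrite /valid_vec /= vg | apply]. Qed.

Lemma gen_subalg_min (P : vec -> Prop) v : is_subalgebra P ->
  (forall g, valid2 g -> S g -> P (vbasis g)) -> A v -> P v.
Proof. by move=> HP HS [_ Av]; apply: Av. Qed.

Lemma gen_subalg_subalgebra : is_subalgebra A.
Proof.
split; first by move=> u [].
split.
  move=> u v [vu Au] vv e; split=> // P HP HS.
  by case: (HP) => _ [HPveq _]; apply: HPveq (Au P HP HS) vv e.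
split; first by split=> // P [_ [_ []]].
split; first by split=> [|P [_ [_ [_ []]]]] //; rewrite /valid_vec /= valid_empty2.
split.
  move=> u v [vu Au] [vv Av]; split; first exact: valid_vec_cat.
  move=> P HP HS; case: (HP) => _ [_ [_ [_ [HPadd _]]]].
  by apply: HPadd; [apply: Au | apply: Av].
split.
  move=> c u [vu Au]; split; first exact: valid_vec_scale.
  by move=> P HP HS; case: (HP) => _ [_ [_ [_ [_ [HPscale _]]]]]; apply: HPscale; apply: Au.
move=> u v [vu Au] [vv Av]; split; first exact: valid_vec_mul.
move=> P HP HS; case: (HP) => _ [_ [_ [_ [_ [_ HPmul]]]]].
by apply: HPmul; [apply: Au | apply: Av].
Qed.

End GeneratedSubalgebra.

Lemma Allp_cat T (P : T -> Prop) s1 s2 : Allp P s1 -> Allp P s2 -> Allp P (s1 ++ s2).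
Proof. by elim: s1 => //= x s IH [Hx Hs] H2; split => //; apply: IH. Qed.

Lemma Allp_map T U (P : U -> Prop) (f : T -> U) s :
  Allp (fun x => P (f x)) s -> Allp P (map f s).
Proof. by elim: s => //= x s IH [Hx Hs]; split => //; apply: IH. Qed.

Lemma Allp_in (T : eqType) (P : T -> Prop) s : (forall x, x \in s -> P x) -> Allp P s.
Proof.
elim: s => //= x s IH H; split; first by apply: H; rewrite inE eqxx.
by apply: IH => y ys; apply: H; rewrite inE ys orbT.
Qed.

Lemma Allp_impl T (P Q : T -> Prop) s : (forall x, P x -> Q x) -> Allp P s -> Allp Q s.
Proof. by move=> H; elim: s => //= x s IH [Hx Hs]; split; [apply: H | apply: IH]. Qed.

Lemma Allp_allpairs T U W (P : W -> Prop) (f : T -> U -> W) s t :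
  Allp (fun x => Allp (fun y => P (f x y)) t) s -> Allp P [seq f x y | x <- s, y <- t].
Proof. by elim: s => //= x s IH [Hx Hs]; apply: Allp_cat (IH Hs); apply: Allp_map. Qed.

Section TensorSquare.
Variable A : vec -> Prop.

Lemma in_tensor_veq2 t t' : veq2 t t' -> in_tensor A t' -> in_tensor A t.
Proof. by move=> e [ab [Hab e']]; exists ab; split=> // a b; rewrite e e'. Qed.

Lemma in_tensor_Delta_basis g :
  (forall K : {set 'I_(nh g)}, edgeset K -> A (vbasis (subg K)) /\ A (vbasis (contr K))) ->
  in_tensor A (Delta (vbasis g)).
Proof.
move=> HK; pose ab := [seq (1%:Q, (vbasis (subg K), vbasis (contr K)))
                         | K <- enum [set K : {set 'I_(nh g)} | edgeset K]].
exists ab; split.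
  by apply/Allp_map/Allp_in => K; rewrite mem_enum inE => /HK.
move=> a b; rewrite !coef2E eval2_Delta (eval2_flatten _ _ (fun p => p.1)) big_map.
rewrite big_cons big_nil addr0 mul1r eval2_cop1 big_enum /=.
apply: eq_big => [K|K _]; first by rewrite inE.
by rewrite mul1r eval2_tens !big_cons !big_nil !addr0 /= !mul1r.
Qed.

End TensorSquare.

Lemma iso2_empty2 G : nv G = 0%N -> nh G = 0%N -> ns G = 0%N -> iso2 G empty2.
Proof.
move=> eV eH eS; apply/iso2P; constructor.
have nV (x : 'I_(nv G)) : False by case: x; rewrite eV.
have nH (x : 'I_(nh G)) : False by case: x; rewrite eH.
have nS (x : 'I_(ns G)) : False by case: x; rewrite eS.
apply: (@Iso2Maps G empty2 (cast_ord eV) (cast_ord eH) (cast_ord eS));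
  try by move=> x; case: (nH x) || case: (nS x).
- by exists (cast_ord (esym eV)) => x; [case: (nV x) | case: x].
- by exists (cast_ord (esym eH)) => x; [case: (nH x) | case: x].
- by exists (cast_ord (esym eS)) => x; [case: (nS x) | case: x].
Qed.

Lemma Delta_cat u v : Delta (u ++ v) = Delta u ++ Delta v.
Proof. by rewrite /Delta map_cat flatten_cat. Qed.

Lemma coproduct_closed_subalgebra A : is_subalgebra A ->
  is_subalgebra (fun v => A v /\ in_tensor A (Delta v)).
Proof.
move=> HA; have [A_valid [A_veq [A0 [A1 [A_add [A_scale A_mul]]]]]] := HA.
split; first by move=> u [/A_valid].
split.
  move=> u v [Au Tu] vv e; split; first exact: A_veq Au vv e.
  by apply: in_tensor_veq2 Tu => a b; rewrite (Delta_veq (A_valid _ Au) vv e).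
split; first by split=> //; exists [::].
split.
  split=> //; apply: in_tensor_Delta_basis => K _.
  have card0 (T : finType) (B : {set T}) : #|T| = 0%N -> #|B| = 0%N.
    by move=> T0; apply/eqP; rewrite -leqn0 -T0 max_card.
  suff A_empty x : iso2 empty2 x -> A (vbasis x).
    by split; apply: A_empty; rewrite iso2_sym iso2_empty2 //= card0 ?card_ord.
  move=> ex; apply: A_veq A1 _ (veq_basis ex).
  by rewrite /valid_vec /= (iso2_valid ex valid_empty2).
split.
  move=> u v [Au [ab [Hab Hu]]] [Av [cd [Hcd Hv]]]; split; first exact: A_add.
  exists (ab ++ cd); split; first exact: Allp_cat.
  by move=> a b; rewrite /vadd Delta_cat map_cat flatten_cat !coef2E !eval2_cat -!coef2E Hu Hv.
split.
  move=> c u [Au [ab [Hab Hu]]]; split; first exact: A_scale.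
  exists [seq (c * p.1, p.2) | p <- ab]; split; first exact: Allp_map.
  move=> a b; have := Hu a b; rewrite !coef2E !eval2_flatten /vscale !big_map /= => E.
  under eq_bigr do rewrite -mulrA.
  by under [RHS]eq_bigr do rewrite -mulrA; rewrite -!mulr_sumr E.
move=> u v [Au [ab [Hab Hu]]] [Av [cd [Hcd Hv]]]; split; first exact: A_mul.
exists (tcomb_mul ab cd); split.
  apply: Allp_allpairs; apply: Allp_impl Hab => p [Ap1 Ap2].
  by apply: Allp_impl Hcd => q [Aq1 Aq2] /=; split; apply: A_mul.
move=> a b; rewrite (Delta_vmul (A_valid _ Au) (A_valid _ Av)).
by rewrite (vmul2_veq2 Hu Hv) vmul2_tcomb.
Qed.

Lemma G2bar_coproduct_terms V G (K : {set 'I_(nh G)}) (K' : {set 'I_(nh (contr K))}) :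
  inG2 V G -> edgeset K -> edgeset K' -> G2bar V (subg K') /\ G2bar V (contr K').
Proof.
move=> GV eK eK'; have vG : valid2 G by case: GV.
have X := contr_contraction vG eK.
have vC := contraction_valid vG eK X.
have eM := edgeset_lift_edges eK X eK'.
have eKM := subg_edgeset eK (sub_lift_edges X K').
split.
  exists (subg (lift_edges X K')), K; split; first exact: inG2_subg.
  split=> //; apply: contraction_iso (contr_contraction (subg_valid vG eM) eKM) _.
  exact: contraction_subg.
exists G, (lift_edges X K'); split=> //; split=> //.
apply: contraction_iso (contr_contraction vG eM) _.
exact: (contraction_comp vG eK X eK' (contr_contraction vC eK')).
Qed.

Lemma in_tensor_Delta_G2bar V g : valid2 g -> G2bar V g ->
  in_tensor (gen_subalg (G2bar V)) (Delta (vbasis g)).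
Proof.
move=> vg [G [K [GV [eK eCg]]]]; have vG : valid2 G by case: GV.
have vC := contraction_valid vG eK (contr_contraction vG eK).
apply: (@in_tensor_veq2 _ _ (Delta (vbasis (contr K)))).
  by move=> a b; rewrite (Delta_veq _ _ (veq_basis eCg)) //= ?vg ?vC.
apply: in_tensor_Delta_basis => K' eK'.
have [Ssub Scontr] := G2bar_coproduct_terms GV eK eK'.
split; apply: gen_subalg_basis => //; first exact: subg_valid.
exact: contraction_valid vC eK' (contr_contraction vC eK').
Qed.

Theorem mainTheorem4 (V : graph1 -> Prop) :
  is_subbialgebra (gen_subalg (G2bar V)).
Proof.
have A_sub := gen_subalg_subalgebra (G2bar V).
split=> // v Av; have [] // := gen_subalg_min (coproduct_closed_subalgebra A_sub) _ Av.
by move=> g vg Sg; split; [apply: gen_subalg_basis | apply: in_tensor_Delta_G2bar].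
Qed.
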